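(* Let $v_1,\ldots,v_k$ be unit vectors in $\mathbb{R}^n$ for some $k \in \mathbb{N}$, and let $S = \mathrm{span}\lbrace v_1,\ldots,v_k\rbrace$. Let $\mathcal{F}$ denote the set of all matrices $F$ whose columns are the vectors of a maximal linearly independent subset $\lbrace f_1,\ldots,f_r\rbrace \subset \lbrace v_1,\ldots,v_k\rbrace$. Let $Q = (I - v_kv_k')(I - v_{k-1}v_{k-1}')\cdots(I - v_1v_1')$. Then $$\sup_{y \in S,\ \|y\|_2 = 1} \|Qy\|_2 \leq \sqrt{1 - \min_{F\in\mathcal{F}} \det(F'F)}.$$
   Context: $'$ denotes transpose; $I$ is the $n\times n$ identity. *)

From HB Require Import structures.
From mathcomp Require Import all_boot all_order all_algebra.
From mathcomp Require Import reals.
Set Implicit Arguments. Unset Strict Implicit. Unset Printing Implicit Defensive.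
Import Order.TTheory GRing.Theory Num.Theory.
Local Open Scope ring_scope.

Section Defs.
Variables (R : realType) (n k : nat) (v : 'I_k -> 'cV[R]_n).

Definition norm2 (y : 'cV[R]_n) : R := Num.sqrt (\sum_(i < n) (y i 0) ^+ 2).

Definition in_span (y : 'cV[R]_n) : Prop :=
  exists c : 'I_k -> R, y = \sum_(j < k) c j *: v j.

Definition projQ : 'M[R]_n :=
  \big[mulmx/1%:M]_(j <- rev (enum 'I_k)) (1%:M - v j *m (v j)^T).

(* matrix F whose columns are the v_j, j in T (in increasing index order) *)
Definition colmx (T : {set 'I_k}) : 'M[R]_(n, #|T|) :=
  \matrix_(i < n, j < #|T|) v (enum_val j) i 0.

Definition lin_indep (T : {set 'I_k}) : bool := \rank (colmx T) == #|T|.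

(* min over maximal linearly independent subsets of det(F'F);
   the family is always nonempty, so the default 1 is never used *)
Definition min_gram_det : R :=
  \big[Num.min/1]_(T : {set 'I_k} | maxset lin_indep T) \det ((colmx T)^T *m colmx T).

End Defs.

From HB Require Import structures.
From mathcomp Require Import all_boot all_order all_algebra.
From mathcomp Require Import reals ring lra.
Import Order.TTheory GRing.Theory Num.Theory.
Local Open Scope ring_scope.

(** Apply the factors of Q one at a time.  After m of them, let
   Q_m = (I - v_m v_m')...(I - v_1 v_1'), let U_m be the orthogonal projector
   onto span{v_1, ..., v_m} and T_m a basis of that span chosen greedily among
   v_1, ..., v_m.  If v_(m+1) = U_m v_(m+1) + z with z <> 0, then v_(m+1) joins
   the basis and det Gram(T_(m+1)) = det Gram(T_m) |z|^2.  The invariant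
   |Q_m y|^2 <= (1 - det Gram(T_m)) |y|^2 on span{v_1, ..., v_m} propagates:
   write y = y' + t z with y' in the old span; Q_m fixes z and keeps y' in the
   old span, and Cauchy-Schwarz bounds <U_m v_(m+1), Q_m y'>.  Finally T_k is
   a maximal independent subset, so det Gram(T_k) is at least the minimum. *)

Set Implicit Arguments. Unset Strict Implicit. Unset Printing Implicit Defensive.

Section DotProduct.
Variables (R : realFieldType) (n : nat).
Implicit Types (x y z u : 'cV[R]_n) (A : 'M[R]_n).

Definition dot x y : R := (x^T *m y) 0 0.

Lemma dotE x y : dot x y = \sum_i x i 0 * y i 0.
Proof. by rewrite /dot mxE; apply: eq_bigr => i _; rewrite mxE. Qed.

Lemma dotC x y : dot x y = dot y x.
Proof. by rewrite !dotE; apply: eq_bigr => i _; rewrite mulrC. Qed.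

Lemma dotDr x y z : dot x (y + z) = dot x y + dot x z.
Proof. by rewrite /dot mulmxDr mxE. Qed.

Lemma dotDl x y z : dot (y + z) x = dot y x + dot z x.
Proof. by rewrite dotC dotDr !(dotC x). Qed.

Lemma dotZr a x y : dot x (a *: y) = a * dot x y.
Proof. by rewrite /dot -scalemxAr mxE. Qed.

Lemma dotZl a x y : dot (a *: x) y = a * dot x y.
Proof. by rewrite dotC dotZr dotC. Qed.

Lemma dotBr x y z : dot x (y - z) = dot x y - dot x z.
Proof. by rewrite dotDr -scaleN1r dotZr mulN1r. Qed.

Lemma dotBl x y z : dot (y - z) x = dot y x - dot z x.
Proof. by rewrite dotC dotBr !(dotC x). Qed.

Lemma dot0r x : dot x 0 = 0.
Proof. by rewrite /dot mulmx0 mxE. Qed.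

Lemma dotMl A x y : dot (A *m x) y = dot x (A^T *m y).
Proof. by rewrite /dot trmx_mul mulmxA. Qed.

Lemma dot_ge0 x : 0 <= dot x x.
Proof. by rewrite dotE sumr_ge0 // => i _; rewrite -expr2 sqr_ge0. Qed.

Lemma dot_eq0 x : (dot x x == 0) = (x == 0).
Proof.
apply/eqP/eqP => [x0|->]; last exact: dot0r.
apply/matrixP => i j; rewrite ord1 mxE; apply/eqP; rewrite -sqrf_eq0.
have /psumr_eq0P : \sum_(l < n) x l 0 ^+ 2 = 0.
  by rewrite -[RHS]x0 dotE; apply: eq_bigr => l _; rewrite expr2.
by move=> /(_ (fun l _ => sqr_ge0 (x l 0)) i isT) ->.
Qed.

Lemma dot_CauchySchwarz x y : dot x y ^+ 2 <= dot x x * dot y y.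
Proof.
have [y0|y_neq0] := eqVneq (dot y y) 0.
  by move/eqP: y0; rewrite dot_eq0 => /eqP ->; rewrite !dot0r expr0n mulr0.
have y_gt0 : 0 < dot y y by rewrite lt_def y_neq0 dot_ge0.
set a := dot x y / dot y y.
have a_yy : a * dot y y = dot x y by rewrite divfK.
have := dot_ge0 (x - a *: y).
rewrite dotBl !dotBr !dotZl !dotZr (dotC y x) a_yy subrr subr0 subr_ge0.
by rewrite /a mulrAC -expr2 ler_pdivrMr.
Qed.

Lemma outer_mulmx x u : x *m x^T *m u = dot x u *: x.
Proof. by rewrite -mulmxA [x^T *m u]mx11_scalar mul_mx_scalar. Qed.

Definition hyperproj x : 'M[R]_n := 1%:M - x *m x^T.

Lemma hyperprojE x u : hyperproj x *m u = u - dot x u *: x.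
Proof. by rewrite mulmxBl mul1mx outer_mulmx. Qed.

Lemma dot_hyperproj x u : dot x x = 1 ->
  dot (hyperproj x *m u) (hyperproj x *m u) = dot u u - dot x u ^+ 2.
Proof.
move=> x1; rewrite hyperprojE dotBl !dotBr !dotZl !dotZr x1 (dotC u x).
by rewrite mulr1 expr2 subrr subr0.
Qed.

End DotProduct.

Lemma norm2_dot (R : realType) n (y : 'cV[R]_n) : norm2 y = Num.sqrt (dot y y).
Proof. by rewrite /norm2 dotE; congr Num.sqrt; apply: eq_bigr => i _; rewrite expr2. Qed.

Lemma norm2_eq1 (R : realType) n (y : 'cV[R]_n) : norm2 y = 1 -> dot y y = 1.
Proof. by rewrite norm2_dot => y1; rewrite -[LHS]sqr_sqrtr ?dot_ge0 // y1 expr1n. Qed.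

Lemma mulmx_cV_inj (R : pzRingType) n (A B : 'M[R]_n) :
  (forall u : 'cV[R]_n, A *m u = B *m u) -> A = B.
Proof.
move=> AB; apply/matrixP => i j.
by have := congr1 (fun u : 'cV[R]_n => u i 0) (AB (delta_mx j 0)); rewrite -!colE !mxE.
Qed.

Lemma castmx_mulmx (R : pzRingType) m p q r (e : p = q)
    (A : 'M[R]_(m, p)) (C : 'M[R]_(p, r)) :
  castmx (erefl m, e) A *m castmx (e, erefl r) C = A *m C.
Proof. by case: q / e; rewrite !castmx_id. Qed.

Lemma det_gram_castmx (R : pzRingType) m p q (e : p = q) (M : 'M[R]_(m, p)) :
  \det ((castmx (erefl m, e) M)^T *m castmx (erefl m, e) M) = \det (M^T *m M).
Proof. by case: q / e; rewrite castmx_id. Qed.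

Lemma det_gram_row_mx (R : realFieldType) n p
    (F : 'M[R]_(n, p)) (a : 'cV[R]_p) (z : 'cV[R]_n) :
  F^T *m z = 0 ->
  \det ((row_mx F (F *m a + z))^T *m row_mx F (F *m a + z)) = \det (F^T *m F) * dot z z.
Proof.
move=> Fz; have zF : z^T *m F = 0 by rewrite -[F]trmxK -trmx_mul Fz trmx0.
have -> : row_mx F (F *m a + z) = row_mx F z *m block_mx 1%:M a 0 1%:M.
  by rewrite mul_row_block !mulmx1 mulmx0 addr0.
rewrite trmx_mul -mulmxA [X in _ *m X]mulmxA tr_row_mx mul_col_row Fz zF.
by rewrite !det_mulmx det_tr !det_ublock !det1 mul1r mulr1 det_mx11 mul1r.
Qed.

Lemma quad_ge0 (R : realFieldType) (D c s w : R) : 0 <= D -> D <= 1 -> 0 <= c ->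
  s ^+ 2 <= (1 - D) * c -> D * (w - s) ^+ 2 <= w ^+ 2 + D * c.
Proof.
move=> D0 D1 c0 sc; have [D_eq1|D_neq1] := eqVneq D 1; first rewrite {}D_eq1 in sc *.
  have -> : s = 0 by apply/eqP; rewrite -sqrf_eq0 eq_le sqr_ge0 andbT; lra.
  by rewrite subr0 !mul1r lerDl.
have D_lt1 : 0 < 1 - D by rewrite subr_gt0 lt_neqAle D_neq1.
have : 0 <= (1 - D) * (w ^+ 2 + D * c - D * (w - s) ^+ 2).
  have -> : (1 - D) * (w ^+ 2 + D * c - D * (w - s) ^+ 2) =
    ((1 - D) * w + D * s) ^+ 2 + D * ((1 - D) * c - s ^+ 2) by ring.
  by rewrite addr_ge0 ?sqr_ge0 // mulr_ge0 // subr_ge0.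
by rewrite pmulr_rge0 // subr_ge0.
Qed.

(* In the application q = |Q y'|^2, Y = |y'|^2, s = <U x, Q y'> and b = |z|^2. *)
Lemma contraction_ineq (R : realFieldType) (D b q Y s t : R) :
  0 < D <= 1 -> 0 <= b <= 1 -> 0 <= Y ->
  q <= (1 - D) * Y -> s ^+ 2 <= (1 - b) * q ->
  q + t ^+ 2 * b - (s + t * b) ^+ 2 <= (1 - D * b) * (Y + t ^+ 2 * b).
Proof.
move=> /andP[D_gt0 D_le1] /andP[b_ge0 b_le1] Y_ge0 qY sq.
have b'_ge0 : 0 <= 1 - b by rewrite subr_ge0.
have s_le : s ^+ 2 <= (1 - D) * ((1 - b) * Y).
  by rewrite mulrCA (le_trans sq) // ler_wpM2l.
have := quad_ge0 (s + t * b) (ltW D_gt0) D_le1 (mulr_ge0 b'_ge0 Y_ge0) s_le.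
rewrite [s + _]addrC addrK; lra.
Qed.

Section OrthogonalProjector.
Variables (R : realFieldType) (n : nat) (U : 'M[R]_n).
Hypotheses (U_sym : U^T = U) (U_idem : U *m U = U).
Implicit Types u : 'cV[R]_n.

Lemma dot_proj_ker u z : U *m z = 0 -> dot (U *m u) z = 0.
Proof. by move=> Uz; rewrite dotMl U_sym Uz dot0r. Qed.

Definition rank1_update (z : 'cV[R]_n) := U + (dot z z)^-1 *: (z *m z^T).

Lemma rank1_updateE z u : rank1_update z *m u = U *m u + (dot z u / dot z z) *: z.
Proof. by rewrite mulmxDl -scalemxAl outer_mulmx scalerA mulrC. Qed.

Lemma rank1_update_sym z : (rank1_update z)^T = rank1_update z.
Proof. by rewrite linearD linearZ /= trmx_mul trmxK U_sym. Qed.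

Variables (x z : 'cV[R]_n).
Hypotheses (x_decomp : x = U *m x + z) (U_z : U *m z = 0) (z_neq0 : dot z z != 0).

Lemma dot_ker_fixed u : U *m u = u -> dot z u = 0.
Proof. by move=> Uu; rewrite dotC -Uu dot_proj_ker. Qed.

Lemma rank1_update_fixed u : U *m u = u -> rank1_update z *m u = u.
Proof. by move=> Uu; rewrite rank1_updateE (dot_ker_fixed Uu) mul0r scale0r addr0. Qed.

Lemma rank1_update_fix_ker : rank1_update z *m z = z.
Proof. by rewrite rank1_updateE U_z add0r divff // scale1r. Qed.

Lemma rank1_update_fix_decomp : rank1_update z *m x = x.
Proof.
have UUx : U *m (U *m x) = U *m x by rewrite mulmxA U_idem.
by rewrite [in LHS]x_decomp mulmxDr rank1_update_fix_ker rank1_update_fixed // -x_decomp.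
Qed.

Lemma rank1_update_idem : rank1_update z *m rank1_update z = rank1_update z.
Proof.
apply: mulmx_cV_inj => u; rewrite -mulmxA [rank1_update z *m u]rank1_updateE.
by rewrite mulmxDr -scalemxAr rank1_update_fix_ker rank1_update_fixed // mulmxA U_idem.
Qed.

Lemma hyperproj_contraction (Q : 'M[R]_n) (D : R) y :
  dot x x = 1 -> 0 < D <= 1 -> Q *m z = z ->
  (forall u, U *m u = u -> U *m (Q *m u) = Q *m u) ->
  (forall u, U *m u = u -> dot (Q *m u) (Q *m u) <= (1 - D) * dot u u) ->
  rank1_update z *m y = y ->
  dot (hyperproj x *m (Q *m y)) (hyperproj x *m (Q *m y)) <= (1 - D * dot z z) * dot y y.
Proof.
move=> x_unit D01 Qz Q_stable Q_contract y_fixed.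
set b := dot z z; set t := dot z y / b; set y' := U *m y; set p := Q *m y'.
have y_decomp : y = y' + t *: z by rewrite -{1}y_fixed rank1_updateE.
have Uy' : U *m y' = y' by rewrite mulmxA U_idem.
have Up : U *m p = p := Q_stable _ Uy'.
have Qy : Q *m y = p + t *: z by rewrite {1}y_decomp mulmxDr -scalemxAr Qz.
have x_sq : dot x x = dot (U *m x) (U *m x) + b.
  by rewrite [in LHS]x_decomp dotDl !dotDr (dotC z) (dot_proj_ker x U_z) addr0 add0r.
have x_p : dot x p = dot (U *m x) p.
  by rewrite [in LHS]x_decomp dotDl (dot_ker_fixed Up) addr0.
have x_z : dot x z = b by rewrite [in LHS]x_decomp dotDl dot_proj_ker // add0r.
have Qy_sq : dot (Q *m y) (Q *m y) = dot p p + t ^+ 2 * b.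
  by rewrite Qy dotDl !dotDr !dotZl !dotZr (dotC p z) (dot_ker_fixed Up) /b; ring.
have y_sq : dot y y = dot y' y' + t ^+ 2 * b.
  by rewrite y_decomp dotDl !dotDr !dotZl !dotZr (dotC y' z) (dot_ker_fixed Uy') /b; ring.
have x_Qy : dot x (Q *m y) = dot (U *m x) p + t * b by rewrite Qy dotDr dotZr x_p x_z.
rewrite dot_hyperproj // Qy_sq x_Qy y_sq; apply: contraction_ineq => //.
- by rewrite dot_ge0 -x_unit x_sq lerDr dot_ge0.
- exact: dot_ge0.
- exact: Q_contract.
- have -> : 1 - b = dot (U *m x) (U *m x) by rewrite -x_unit x_sq addrK.
  exact: dot_CauchySchwarz.
Qed.

End OrthogonalProjector.

Lemma enum_setU1_last k (T : {set 'I_k}) (j : 'I_k) :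
  (forall t, t \in T -> (t < j)%N) -> enum (j |: T) = rcons (enum T) j.
Proof.
move=> T_lt_j; pose lt_ord (a b : 'I_k) := (a < b)%N.
have lt_ord_trans : transitive lt_ord by move=> ? ? ?; apply: ltn_trans.
have enum_sorted (A : {set 'I_k}) : sorted lt_ord (enum A).
  rewrite /enum_mem -enumT (sorted_filter lt_ord_trans) //.
  by have := iota_ltn_sorted 0 k; rewrite -val_enum_ord sorted_map.
apply: (irr_sorted_eq lt_ord_trans) => [a|||a].
- by rewrite /lt_ord ltnn.
- exact: enum_sorted.
- have := enum_sorted T; case: (enum T) (mem_enum T) => [|t s] //= memT.
  by rewrite rcons_path => ->; rewrite /lt_ord T_lt_j // -memT mem_last.
- by rewrite mem_rcons in_cons !mem_enum in_setU1.
Qed.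

Section GreedyBasis.
Variables (R : realType) (n k : nat) (v : 'I_k -> 'cV[R]_n).
Hypothesis v_unit : forall j, dot (v j) (v j) = 1.

Definition projQ_take m : 'M[R]_n :=
  \big[mulmx/1%:M]_(j <- rev (take m (enum 'I_k))) hyperproj (v j).

Lemma projQ_take0 : projQ_take 0 = 1%:M.
Proof. by rewrite /projQ_take take0 big_nil. Qed.

Lemma projQ_takeS m (hm : (m < k)%N) :
  projQ_take m.+1 = hyperproj (v (Ordinal hm)) *m projQ_take m.
Proof.
rewrite /projQ_take (take_nth (Ordinal hm)) ?size_enum_ord // rev_rcons big_cons.
by congr (hyperproj (v _) *m _); apply: val_inj; rewrite /= nth_enum_ord.
Qed.

Lemma projQ_takeE : projQ_take k = projQ v.
Proof. by rewrite /projQ_take take_oversize ?size_enum_ord. Qed.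

Lemma ltnS_ord m (hm : (m < k)%N) (i : 'I_k) :
  (i < m.+1)%N -> (i < m)%N \/ i = Ordinal hm.
Proof. by rewrite ltnS leq_eqVlt => /orP[/eqP i_m|]; [right; apply: val_inj|left]. Qed.

Lemma projQ_take_orth m w : (m <= k)%N ->
  (forall i : 'I_k, (i < m)%N -> dot (v i) w = 0) -> projQ_take m *m w = w.
Proof.
elim: m => [|m IHm] hm w_orth; first by rewrite projQ_take0 mul1mx.
have w_orth_m (i : 'I_k) : (i < m)%N -> dot (v i) w = 0 by move/ltnW; apply: w_orth.
rewrite projQ_takeS -mulmxA IHm 1?ltnW // hyperprojE.
by rewrite (w_orth (Ordinal hm) (ltnSn m)) scale0r subr0.
Qed.

Lemma projQ_take_stable m (U : 'M[R]_n) (u : 'cV[R]_n) : (m <= k)%N ->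
  (forall i : 'I_k, (i < m)%N -> U *m v i = v i) -> U *m u = u ->
  U *m (projQ_take m *m u) = projQ_take m *m u.
Proof.
move=> + U_fix Uu; elim: m U_fix => [|m IHm] U_fix hm; first by rewrite projQ_take0 mul1mx.
rewrite projQ_takeS -mulmxA hyperprojE mulmxBr -scalemxAr U_fix // IHm ?(ltnW hm) //.
by move=> i /ltnW; apply: U_fix.
Qed.

Definition gram (T : {set 'I_k}) := (colmx v T)^T *m colmx v T.

Lemma colmx_setU1 (T : {set 'I_k}) (j : 'I_k) (e : (#|T| + 1)%N = #|j |: T|) :
  (forall t, t \in T -> (t < j)%N) ->
  colmx v (j |: T) = castmx (erefl n, e) (row_mx (colmx v T) (v j)).
Proof.
move=> T_lt_j; apply/matrixP => i l.
rewrite castmxE /= !mxE (enum_val_nth j) enum_setU1_last //.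
case: splitP => [l1 l_l1 | l2 l_l2]; rewrite ?mxE nth_rcons -cardE /=.
  have -> : (l : nat) = l1 by rewrite -l_l1.
  by rewrite ltn_ord (enum_val_nth j) cast_ord_id.
have -> : (l : nat) = #|T| by move: l_l2; rewrite ord1 addn0.
by rewrite ltnn eqxx ord1 cast_ord_id.
Qed.

Lemma det_gram_setU1 (T : {set 'I_k}) (j : 'I_k) (a : 'cV[R]_#|T|) (z : 'cV[R]_n) :
  (forall t, t \in T -> (t < j)%N) ->
  v j = colmx v T *m a + z -> (colmx v T)^T *m z = 0 ->
  \det (gram (j |: T)) = \det (gram T) * dot z z.
Proof.
move=> T_lt_j vj_decomp cols_z.
have j_notin : j \notin T by apply/negP => /T_lt_j; rewrite ltnn.
have e : (#|T| + 1)%N = #|j |: T| by rewrite cardsU1 j_notin addnC.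
by rewrite /gram (colmx_setU1 e) // det_gram_castmx vj_decomp det_gram_row_mx.
Qed.

Lemma colmx_fixed (U : 'M[R]_n) (T : {set 'I_k}) :
  (forall t, t \in T -> U *m v t = v t) -> U *m colmx v T = colmx v T.
Proof.
move=> U_fix; apply/matrixP => i l.
by rewrite !mxE -(U_fix _ (enum_valP l)) mxE; apply: eq_bigr => r _; rewrite mxE.
Qed.

(* The state once the first m vectors are processed; [gb_coef] witnesses
   that the range of the projector [gb_proj] lies in the span of [gb_set]. *)
Record greedy_basis m := GreedyBasis {
  gb_set : {set 'I_k};
  gb_proj : 'M[R]_n;
  gb_coef : 'M[R]_(#|gb_set|, n);
  gb_set_lt : forall t, t \in gb_set -> (t < m)%N;
  gb_proj_sym : gb_proj^T = gb_proj;
  gb_proj_idem : gb_proj *m gb_proj = gb_proj;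
  gb_proj_fix : forall i : 'I_k, (i < m)%N -> gb_proj *m v i = v i;
  gb_projE : gb_proj = colmx v gb_set *m gb_coef;
  gb_det_gt0 : 0 < \det (gram gb_set);
  gb_det_le1 : \det (gram gb_set) <= 1;
  gb_contract : forall y, gb_proj *m y = y ->
    dot (projQ_take m *m y) (projQ_take m *m y) <= (1 - \det (gram gb_set)) * dot y y }.

Lemma greedy_basis0 : greedy_basis 0.
Proof.
have det_gram0 : \det (gram set0) = 1.
  by move: (gram set0); rewrite cards0 => A; exact: det_mx00.
apply: (@GreedyBasis 0 set0 0 0); rewrite ?det_gram0 ?subrr ?mul0r ?trmx0 ?mulmx0 //.
- by move=> t; rewrite inE.
- by move=> y; rewrite mul0mx mul0r => <-; rewrite mulmx0 dot0r.
Qed.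

Lemma greedy_basis_step_span m (hm : (m < k)%N) (G : greedy_basis m) :
  gb_proj G *m v (Ordinal hm) = v (Ordinal hm) -> greedy_basis m.+1.
Proof.
case: G => T U B T_lt U_sym U_idem U_fix UE D_gt0 D_le1 contract /= U_vj.
apply: (@GreedyBasis m.+1 T U B) => //.
- by move=> t /T_lt /ltnW.
- by move=> i /(ltnS_ord hm) [/U_fix|->].
- move=> y /contract; rewrite projQ_takeS -mulmxA dot_hyperproj //.
  by apply: le_trans; rewrite lerBlDr lerDl sqr_ge0.
Qed.

Lemma greedy_basis_step_new m (hm : (m < k)%N) (G : greedy_basis m) (z : 'cV[R]_n) :
  z = v (Ordinal hm) - gb_proj G *m v (Ordinal hm) -> dot z z != 0 -> greedy_basis m.+1.
Proof.
case: G => T U B T_lt U_sym U_idem U_fix UE D_gt0 D_le1 contract /= z_def z_neq0.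
set j := Ordinal hm; set x := v j; set b := dot z z.
have U_z : U *m z = 0 by rewrite z_def mulmxBr mulmxA U_idem subrr.
have x_decomp : x = U *m x + z by rewrite z_def addrC subrK.
have U_cols : U *m colmx v T = colmx v T by apply: colmx_fixed => t /T_lt /U_fix.
have cols_z : (colmx v T)^T *m z = 0 by rewrite -U_cols trmx_mul U_sym -mulmxA U_z mulmx0.
have x_cols : x = colmx v T *m (B *m x) + z by rewrite mulmxA -UE -x_decomp.
have det_new : \det (gram (j |: T)) = \det (gram T) * b :=
  det_gram_setU1 (j := j) T_lt x_cols cols_z.
have b_gt0 : 0 < b by rewrite lt_def z_neq0 dot_ge0.
have b_le1 : b <= 1.
  have := v_unit j; rewrite -/x [in LHS]x_decomp dotDl !dotDr (dotC z).
  by rewrite (dot_proj_ker U_sym x U_z) addr0 add0r => <-; rewrite lerDr dot_ge0.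
have j_notin : j \notin T by apply/negP => /T_lt; rewrite ltnn.
have e : (#|T| + 1)%N = #|j |: T| by rewrite cardsU1 j_notin addnC.
apply: (@GreedyBasis m.+1 (j |: T) (rank1_update U z)
  (castmx (e, erefl n) (col_mx (B *m (1%:M - b^-1 *: (x *m z^T))) (b^-1 *: z^T)))).
- by move=> t; rewrite in_setU1 => /orP[/eqP -> // | /T_lt /ltnW].
- exact: rank1_update_sym.
- exact: rank1_update_idem.
- move=> i /(ltnS_ord hm) [/U_fix Uv | ->]; first exact: rank1_update_fixed.
  exact: rank1_update_fix_decomp.
- rewrite (colmx_setU1 e) // castmx_mulmx mul_row_col mulmxA -UE mulmxBr mulmx1.
  rewrite /rank1_update -/b -addrA; congr (_ + _).
  by rewrite -!scalemxAr mulmxA -scalerN -scalerDr addrC -mulmxBl -z_def.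
- by rewrite det_new mulr_gt0.
- by rewrite det_new mulr_ile1 // ltW.
- move=> y y_fixed; rewrite projQ_takeS -mulmxA det_new.
  apply: hyperproj_contraction y_fixed => //; first by rewrite D_gt0 D_le1.
  + apply: projQ_take_orth (ltnW hm) _ => i /U_fix <-.
    by rewrite dot_proj_ker.
  + by move=> u; apply: projQ_take_stable (ltnW hm) U_fix.
Qed.

Lemma greedy_basis_step m (hm : (m < k)%N) : greedy_basis m -> greedy_basis m.+1.
Proof.
move=> G; set z := v (Ordinal hm) - gb_proj G *m v (Ordinal hm).
have [z0|z_neq0] := eqVneq (dot z z) 0; last exact: greedy_basis_step_new erefl z_neq0.
apply: (@greedy_basis_step_span m hm G); apply/eqP.
by move/eqP: z0; rewrite dot_eq0 subr_eq0 eq_sym.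
Qed.

Lemma greedy_basis_exists m : (m <= k)%N -> greedy_basis m.
Proof.
elim: m => [|m IHm] hm; first exact: greedy_basis0.
exact: greedy_basis_step hm (IHm (ltnW hm)).
Qed.

Lemma greedy_basis_lin_indep m (G : greedy_basis m) : lin_indep v (gb_set G).
Proof.
rewrite /lin_indep eqn_leq rank_leq_col /=.
have gram_unit : gram (gb_set G) \in unitmx.
  by rewrite unitmxE unitfE gt_eqF ?gb_det_gt0.
by rewrite -{1}(mxrank_unit gram_unit) mxrankM_maxr.
Qed.

Lemma greedy_basis_maxset (G : greedy_basis k) : maxset (lin_indep v) (gb_set G).
Proof.
apply/maxsetP; split=> [|S S_indep sub_S]; first exact: greedy_basis_lin_indep.
apply/eqP; rewrite eq_sym eqEcard sub_S /= -(eqP S_indep).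
rewrite -(eqP (greedy_basis_lin_indep G)).
have -> : colmx v S = colmx v (gb_set G) *m (gb_coef G *m colmx v S).
  by rewrite mulmxA -gb_projE colmx_fixed // => t _; apply: gb_proj_fix.
exact: mxrankM_maxl.
Qed.

End GreedyBasis.

Theorem mainTheorem9 (R : realType) (n k : nat) (v : 'I_k -> 'cV[R]_n) :
  (forall j, norm2 (v j) = 1) ->
  forall y : 'cV[R]_n, in_span v y -> norm2 y = 1 ->
  norm2 (projQ v *m y) <= Num.sqrt (1 - min_gram_det v).
Proof.
move=> v_norm y [c ->] y_norm.
have v_unit j : dot (v j) (v j) = 1 by apply: norm2_eq1.
have G := greedy_basis_exists v_unit (leqnn k).
have U_span : gb_proj G *m \sum_(j < k) c j *: v j = \sum_(j < k) c j *: v j.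
  by rewrite mulmx_sumr; apply: eq_bigr => j _; rewrite -scalemxAr gb_proj_fix.
have := gb_contract U_span; rewrite projQ_takeE (norm2_eq1 y_norm) mulr1 => Qy.
have min_le : min_gram_det v <= \det (gram v (gb_set G)).
  exact: bigmin_le_cond (greedy_basis_maxset G).
by rewrite norm2_dot ler_wsqrtr //; lra.
Qed.
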